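(* Let $m,n\ge0$ be integers and $\Gamma={\rm SR}(m,n)$. (i) Any two adjacent vertices $u,v$ uniquely determine three cliques $C_1,C_2,C_3$, where $C_i$ is the unique largest clique of type $i$ containing $u$ and $v$, such that $C_i\cap C_j=\{u,v\}$ for distinct $i,j\in\{1,2,3\}$, and $C_1\cup C_2\cup C_3$ contains all common neighbours of $u$ and $v$. (ii) Fix a vertex $u$ and let $U$ be its set of neighbours. For each $i\in\{1,2,3\}$, the maximal cliques of type $i$ containing $u$, with $u$ removed, form a partition of $U$. Each edge of the subgraph induced on $U$ is contained in a unique such clique (among all three types), and hence has a unique type. (iii) $\Gamma$ does not contain an induced subgraph isomorphic to the complete tripartite graph $K_{1,1,4}$.
   Context: $\mathbb{N}=\{0,1,2,\dots\}$; $e_i$ is the $i$-th standard unit vector. ${\rm SR}(m,n)$ has as vertices the vectors in $\mathbb{N}^m$ with coordinate sum $n$, two being adjacent when they differ in precisely two coordinates. Every clique is of (at least) one of three types: type 1: all pairs of distinct vertices in the clique differ exactly in coordinates $j,k$ for one fixed pair $j\ne k$; type 2: the clique is $\{x+ae_i: i\in I\}$ with $1\le a\le n$, $x\in\mathbb{N}^m$ of coordinate sum $n-a$, $I\subseteq\{1,\dots,m\}$; type 3: the clique is $\{x-ae_i:i\in I\}$ with $a\ge1$, $x\in\mathbb{N}^m$ of coordinate sum $n+a$, $I\subseteq\{1,\dots,m\}$, $x_i\ge a$ for $i\in I$. *)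

From mathcomp Require Import all_boot.
Set Implicit Arguments. Unset Strict Implicit. Unset Printing Implicit Defensive.

(* Every
   coordinate is <= n, so we store coordinates in 'I_n.+1; this represents
   exactly the vectors of N^m with coordinate sum n, and gives a finType. *)
Definition SRV (m n : nat) :=
  {x : {ffun 'I_m -> 'I_n.+1} | \sum_(i < m) (x i : nat) == n}.

Section SR.
Variables m n : nat.
Local Notation V := (SRV m n).

Definition cd (v : V) (i : 'I_m) : nat := val (val v i).

Definition adj (u v : V) : bool := #|[set i | cd u i != cd v i]| == 2.

Definition clique (C : {set V}) : Prop :=
  forall u v, u \in C -> v \in C -> u != v -> adj u v.

Definition type1 (C : {set V}) : Prop :=
  exists j k : 'I_m, j != k /\
    forall u v, u \in C -> v \in C -> u != v ->
      forall l, (cd u l != cd v l) = ((l == j) || (l == k)).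

Definition type2 (C : {set V}) : Prop :=
  exists (a : nat) (x : 'I_m -> nat) (I : {set 'I_m}),
    1 <= a <= n /\ \sum_(l < m) x l = n - a /\
    forall v, v \in C <->
      exists2 i, i \in I & forall l, cd v l = x l + (if l == i then a else 0).

Definition type3 (C : {set V}) : Prop :=
  exists (a : nat) (x : 'I_m -> nat) (I : {set 'I_m}),
    1 <= a /\ \sum_(l < m) x l = n + a /\ (forall i, i \in I -> a <= x i) /\
    forall v, v \in C <->
      exists2 i, i \in I & forall l, cd v l = x l - (if l == i then a else 0).

Definition clique_of_type (i : nat) (C : {set V}) : Prop :=
  clique C /\
  match i with
  | 1 => type1 C
  | 2 => type2 C
  | 3 => type3 C
  | _ => False
  end.

Definition largest_type (i : nat) (u v : V) (C : {set V}) : Prop :=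
  clique_of_type i C /\ u \in C /\ v \in C /\
  forall D, clique_of_type i D -> u \in D -> v \in D -> D \subset C.

Definition maximal_type (i : nat) (u : V) (C : {set V}) : Prop :=
  clique_of_type i C /\ u \in C /\
  forall D, clique_of_type i D -> C \subset D -> D = C.

End SR.

From mathcomp Require Import all_boot zify.
Set Implicit Arguments. Unset Strict Implicit. Unset Printing Implicit Defensive.

(* An edge uv of SR(m,n) moves an amount a from a coordinate q to a coordinate
   p.  With lo = min(u,v) and hi = max(u,v) coordinatewise, u and v lie on the
   type-1 clique of vertices agreeing with u off {p,q}, on the type-2 clique
   {lo + a e_i} and on the type-3 clique {hi - a e_i}, and any clique of type
   2 (resp. 3) through u and v has base point lo (resp. hi) and step a, so
   these are the largest ones.  A common neighbour w moves some b from q' to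
   p'; comparing the supports of u-v, u-w and v-w forces p' = p (w lies on
   the type-3 clique), q' = q (type 2) or {p',q'} = {p,q} (type 1). *)

Section Coordinates.
Variables m n : nat.
Local Notation V := (SRV m n).
Implicit Types u v w : V.

Definition agree_off (p q : 'I_m) u v :=
  forall l, l != p -> l != q -> cd u l = cd v l.

Definition raised (x : 'I_m -> nat) (a : nat) (i : 'I_m) w :=
  forall l, cd w l = x l + (if l == i then a else 0).

Definition lowered (x : 'I_m -> nat) (a : nat) (i : 'I_m) w :=
  forall l, cd w l = x l - (if l == i then a else 0).

Lemma cd_inj u v : (forall l, cd u l = cd v l) -> u = v.
Proof. by move=> h; apply/val_inj/ffunP => l; apply/val_inj/h. Qed.

Lemma sum_cd v : \sum_(i < m) cd v i = n.
Proof. exact: eqP (valP v). Qed.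

Lemma cd_le v i : cd v i <= n.
Proof. by rewrite -ltnS ltn_ord. Qed.

Lemma sum_delta (i : 'I_m) a : \sum_(l < m) (if l == i then a else 0) = a.
Proof. by rewrite -big_mkcond big_pred1_eq. Qed.

Lemma adjxx u : adj u u = false.
Proof.
by rewrite /adj (_ : [set i | _] = set0) ?cards0 //; apply/setP => i; rewrite !inE eqxx.
Qed.

Lemma adj_neq u v : adj u v -> u != v.
Proof. by apply: contraTneq => ->; rewrite adjxx. Qed.

Lemma adj_agree_off u v p q : adj u v -> p != q ->
  cd u p != cd v p -> cd u q != cd v q -> agree_off p q u v.
Proof.
move=> /cards2P [s [t [_ E]]] pq hp hq l lp lq; apply/eqP/negPn/negP => hl.
have mem r : cd u r != cd v r -> (r == s) || (r == t).
  move=> hr; have : r \in [set i | cd u i != cd v i] by rewrite inE.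
  by rewrite E !inE.
move: (mem _ hp) (mem _ hq) (mem _ hl) pq lp lq.
by do 3 case/orP=> /eqP->; rewrite ?eqxx.
Qed.

Lemma agree_off_sum2 u v p q : p != q -> agree_off p q u v ->
  cd u p + cd u q = cd v p + cd v q.
Proof.
move=> pq h.
have split_pq w : \sum_(i < m) cd w i =
    cd w p + cd w q + \sum_(i < m | (i != p) && (i != q)) cd w i.
  by rewrite (bigD1 p) // (bigD1 q) /= ?addnA // eq_sym.
have rest : \sum_(i < m | (i != p) && (i != q)) cd u i =
            \sum_(i < m | (i != p) && (i != q)) cd v i.
  by apply: eq_bigr => i /andP[]; exact: h.
by have := sum_cd u; have := sum_cd v; rewrite !split_pq rest; lia.
Qed.

Lemma agree_off_diff2 u v p q : p != q -> agree_off p q u v -> u != v ->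
  cd u p != cd v p /\ cd u q != cd v q.
Proof.
move=> pq h neq; have s2 := agree_off_sum2 pq h.
suff hp : cd u p != cd v p by split => //; apply: contra hp => /eqP; lia.
apply: contra neq => /eqP ep; apply/eqP/cd_inj => l.
case: (eqVneq l p) => [->//|lp]; case: (eqVneq l q) => [->|lq]; first lia.
exact: h.
Qed.

Lemma agree_off_adj u v p q : p != q -> agree_off p q u v -> u != v -> adj u v.
Proof.
move=> pq h neq; have [hp hq] := agree_off_diff2 pq h neq.
rewrite /adj (_ : [set i | _] = [set p; q]) ?cards2 ?pq //.
apply/setP => l; rewrite !inE; case: (eqVneq l p) => [->|lp] //.
by case: (eqVneq l q) => [->|lq] //=; rewrite h // eqxx.
Qed.

Lemma adj_shift u v : adj u v -> exists p q a, [/\ p != q, 0 < a,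
  cd v p = cd u p + a, cd u q = cd v q + a & agree_off p q u v].
Proof.
move=> /[dup] huv /cards2P [s [t [st E]]].
have : s \in [set i | cd u i != cd v i] by rewrite E !inE eqxx.
have : t \in [set i | cd u i != cd v i] by rewrite E !inE eqxx orbT.
rewrite !inE => ht hs.
have hr := adj_agree_off huv st hs ht; have s2 := agree_off_sum2 st hr.
case: (ltngtP (cd u s) (cd v s)) => h.
- by exists s, t, (cd v s - cd u s); split => //; lia.
- exists t, s, (cd u s - cd v s); split; rewrite 1?eq_sym //; try lia.
  by move=> l lt ls; apply: hr.
- by rewrite h eqxx in hs.
Qed.

Lemma raised_adj x a i i' w w' : raised x a i w -> raised x a i' w' ->
  w != w' -> adj w w'.
Proof.
move=> hw hw' neq; case: (eqVneq i i') => [ii|ii].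
  by subst i'; case/eqP: neq; apply: cd_inj => l; rewrite hw hw'.
by apply: (agree_off_adj ii) neq => l li li'; rewrite hw hw' (negbTE li) (negbTE li').
Qed.

Lemma lowered_adj x a i i' w w' : lowered x a i w -> lowered x a i' w' ->
  w != w' -> adj w w'.
Proof.
move=> hw hw' neq; case: (eqVneq i i') => [ii|ii].
  by subst i'; case/eqP: neq; apply: cd_inj => l; rewrite hw hw'.
by apply: (agree_off_adj ii) neq => l li li'; rewrite hw hw' (negbTE li) (negbTE li').
Qed.

End Coordinates.

Section Edge.
Variables (m n : nat) (u v : SRV m n) (p q : 'I_m) (a : nat).
Hypotheses (pq : p != q) (a_gt0 : 0 < a) (vp : cd v p = cd u p + a)
  (uq : cd u q = cd v q + a) (uv_off : agree_off p q u v).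

Let qp : q != p. Proof. by rewrite eq_sym. Qed.

Definition lo l := minn (cd u l) (cd v l).
Definition hi l := maxn (cd u l) (cd v l).

Definition edge_clique1 :=
  [set w : SRV m n | [forall l, (l != p) && (l != q) ==> (cd w l == cd u l)]].
Definition edge_clique2 :=
  [set w : SRV m n | [exists i,
    [forall l, cd w l == lo l + (if l == i then a else 0)]]].
Definition edge_clique3 :=
  [set w : SRV m n | [exists i, (a <= hi i) &&
    [forall l, cd w l == hi l - (if l == i then a else 0)]]].

Lemma edge_clique1P w : reflect (agree_off p q w u) (w \in edge_clique1).
Proof.
rewrite inE; apply: (iffP forallP) => h l.
  by move=> lp lq; have /implyP := h l; rewrite lp lq => /(_ isT)/eqP.
by apply/implyP => /andP[lp lq]; rewrite h.
Qed.

Lemma edge_clique2P w : reflect (exists i, raised lo a i w) (w \in edge_clique2).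
Proof.
rewrite inE; apply: (iffP existsP) => [[i /forallP h]|[i h]]; exists i.
  by move=> l; apply/eqP.
by apply/forallP => l; rewrite h.
Qed.

Lemma edge_clique3P w :
  reflect (exists2 i, a <= hi i & lowered hi a i w) (w \in edge_clique3).
Proof.
rewrite inE; apply: (iffP existsP) => [[i /andP[ai /forallP h]]|[i ai h]].
  by exists i => // l; apply/eqP.
by exists i; rewrite ai; apply/forallP => l; rewrite h.
Qed.

Lemma lo_off l : l != p -> l != q -> lo l = cd u l.
Proof. by move=> lp lq; have := uv_off lp lq; rewrite /lo; lia. Qed.

Lemma hi_off l : l != p -> l != q -> hi l = cd u l.
Proof. by move=> lp lq; have := uv_off lp lq; rewrite /hi; lia. Qed.

Ltac coord_cases l := case: (eqVneq l p) => [->|lp];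
  [|case: (eqVneq l q) => [->|lq]];
  rewrite ?eqxx ?(negbTE pq) ?(negbTE qp) /lo /hi;
  [| |have := uv_off ltac:(eassumption) ltac:(eassumption)]; lia.

Lemma u_raised : raised lo a q u. Proof. by move=> l; coord_cases l. Qed.
Lemma v_raised : raised lo a p v. Proof. by move=> l; coord_cases l. Qed.
Lemma u_lowered : lowered hi a p u. Proof. by move=> l; coord_cases l. Qed.
Lemma v_lowered : lowered hi a q v. Proof. by move=> l; coord_cases l. Qed.

Lemma hi_v l : hi l = cd v l + (if l == q then a else 0).
Proof. by coord_cases l. Qed.

Lemma hi_p : a <= hi p. Proof. by rewrite /hi; lia. Qed.
Lemma hi_q : a <= hi q. Proof. by rewrite /hi; lia. Qed.

Lemma u_edge_clique1 : u \in edge_clique1. Proof. by apply/edge_clique1P. Qed.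
Lemma v_edge_clique1 : v \in edge_clique1.
Proof. by apply/edge_clique1P => l lp lq; rewrite uv_off. Qed.
Lemma u_edge_clique2 : u \in edge_clique2.
Proof. by apply/edge_clique2P; exists q; exact: u_raised. Qed.
Lemma v_edge_clique2 : v \in edge_clique2.
Proof. by apply/edge_clique2P; exists p; exact: v_raised. Qed.
Lemma u_edge_clique3 : u \in edge_clique3.
Proof. by apply/edge_clique3P; exists p; [exact: hi_p|exact: u_lowered]. Qed.
Lemma v_edge_clique3 : v \in edge_clique3.
Proof. by apply/edge_clique3P; exists q; [exact: hi_q|exact: v_lowered]. Qed.

Lemma adj_uv : adj u v.
Proof.
by apply: (agree_off_adj pq uv_off); apply/eqP => e; move: vp; rewrite e; lia.
Qed.

Lemma edge_clique1_largest : largest_type 1 u v edge_clique1.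
Proof.
have off w w' : w \in edge_clique1 -> w' \in edge_clique1 -> agree_off p q w w'.
  by move=> /edge_clique1P h /edge_clique1P h' l lp lq; rewrite h ?h'.
split; [split|split; [exact: u_edge_clique1|split; [exact: v_edge_clique1|]]].
- by move=> w w' hw hw'; apply: agree_off_adj pq (off _ _ hw hw').
- exists p, q; split => // w w' hw hw' neq l.
  have [dp dq] := agree_off_diff2 pq (off _ _ hw hw') neq.
  case: (eqVneq l p) => [->//|lp]; case: (eqVneq l q) => [->//|lq].
  by rewrite (off _ _ hw hw') // eqxx.
move=> D [_ [j [k [_ hD]]]] hu hv; apply/subsetP => w hw.
apply/edge_clique1P => l lp lq; case: (eqVneq w u) => [->//|wu].
have := hD u v hu hv (adj_neq adj_uv) l.
by rewrite -(hD w u hw hu wu l) (uv_off lp lq) eqxx => /esym/negbFE/eqP.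
Qed.

(* A type-2 clique through u and v must raise u at q and v at p, which pins
   down its step a and base point lo. *)
Lemma edge_clique2_largest : largest_type 2 u v edge_clique2.
Proof.
split; [split|split; [exact: u_edge_clique2|split; [exact: v_edge_clique2|]]].
- by move=> w w' /edge_clique2P[i hi] /edge_clique2P[i' hi']; apply: raised_adj hi hi'.
- exists a, lo, setT; split; [|split].
  + by rewrite a_gt0 /=; have := cd_le u q; lia.
  + have := sum_cd u; rewrite (eq_bigr _ (fun l _ => u_raised l)).
    by rewrite big_split /= sum_delta; lia.
  + move=> w; split => [/edge_clique2P[i h]|[i _ h]]; first by exists i.
    by apply/edge_clique2P; exists i.
move=> D [_ [b [x [I [_ [_ hD]]]]]] hu hv.
have [i1 _ h1] := (hD u).1 hu; have [i2 _ h2] := (hD v).1 hv.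
have e1 : i1 = q.
  apply/eqP; apply: contraT; rewrite eq_sym => ne; have := h1 q; have := h2 q.
  by rewrite (negbTE ne); case: (q == i2) => /=; lia.
subst i1.
have e2 : i2 = p.
  apply/eqP; apply: contraT; rewrite eq_sym => ne; have := h1 p; have := h2 p.
  by rewrite (negbTE ne) (negbTE pq); lia.
subst i2.
have eb : b = a by have := h1 q; have := h2 q; rewrite eqxx (negbTE qp); lia.
subst b.
have x_lo l : x l = lo l.
  have := h1 l; have := h2 l; rewrite /lo.
  case: (eqVneq l p) => [->|lp]; first by rewrite (negbTE pq); lia.
  by case: (eqVneq l q) => [->|lq]; lia.
apply/subsetP => w hw; have [i _ h] := (hD w).1 hw.
by apply/edge_clique2P; exists i => l; rewrite h x_lo.
Qed.

Lemma edge_clique3_largest : largest_type 3 u v edge_clique3.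
Proof.
split; [split|split; [exact: u_edge_clique3|split; [exact: v_edge_clique3|]]].
- move=> w w' /edge_clique3P[i _ hi] /edge_clique3P[i' _ hi'].
  exact: lowered_adj hi hi'.
- exists a, hi, [set i | a <= hi i]; split; first exact: a_gt0.
  split.
    have := sum_cd v; rewrite (eq_bigr _ (fun l _ => hi_v l)).
    by rewrite big_split /= sum_delta; lia.
  split; first by move=> i; rewrite inE.
  move=> w; split => [/edge_clique3P[i ai h]|[i]]; first by exists i; rewrite ?inE.
  by rewrite inE => ai h; apply/edge_clique3P; exists i.
move=> D [_ [b [x [I [_ [_ [hI hD]]]]]]] hu hv.
have [i1 hi1 h1] := (hD u).1 hu; have [i2 hi2 h2] := (hD v).1 hv.
have := hI _ hi1; have := hI _ hi2 => x2 x1.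
have e1 : i1 = p.
  apply/eqP; apply: contraT; rewrite eq_sym => ne; have := h1 p; have := h2 p.
  by rewrite (negbTE ne); case: (p == i2) => /=; lia.
subst i1.
have e2 : i2 = q.
  apply/eqP; apply: contraT; rewrite eq_sym => ne; have := h1 q; have := h2 q.
  by rewrite (negbTE ne) (negbTE qp); lia.
subst i2.
have eb : b = a by have := h1 p; have := h2 p; rewrite eqxx (negbTE pq); lia.
subst b.
have x_hi l : x l = hi l.
  have := h1 l; have := h2 l; rewrite /hi.
  case: (eqVneq l p) => [->|lp]; first by rewrite (negbTE pq); lia.
  by case: (eqVneq l q) => [->|lq]; lia.
apply/subsetP => w hw; have [i hi h] := (hD w).1 hw.
apply/edge_clique3P; exists i => [|l]; last by rewrite h x_hi.
by rewrite -x_hi; exact: hI.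
Qed.

Lemma edge_clique12I : edge_clique1 :&: edge_clique2 = [set u; v].
Proof.
apply/setP => w; rewrite in_setI in_set2; apply/idP/idP; last first.
  by case/orP => /eqP ->; rewrite ?u_edge_clique1 ?u_edge_clique2
    ?v_edge_clique1 ?v_edge_clique2.
move=> /andP[/edge_clique1P h1 /edge_clique2P[i h2]].
case: (eqVneq i q) => [ei|iq].
  by subst; apply/orP; left; apply/eqP/cd_inj => l; rewrite h2 u_raised.
case: (eqVneq i p) => [ei|ip].
  by subst; apply/orP; right; apply/eqP/cd_inj => l; rewrite h2 v_raised.
by have := h1 i ip iq; have := h2 i; rewrite eqxx (lo_off ip iq); lia.
Qed.

Lemma edge_clique13I : edge_clique1 :&: edge_clique3 = [set u; v].
Proof.
apply/setP => w; rewrite in_setI in_set2; apply/idP/idP; last first.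
  by case/orP => /eqP ->; rewrite ?u_edge_clique1 ?u_edge_clique3
    ?v_edge_clique1 ?v_edge_clique3.
move=> /andP[/edge_clique1P h1 /edge_clique3P[i ai h3]].
case: (eqVneq i p) => [ei|ip].
  by subst; apply/orP; left; apply/eqP/cd_inj => l; rewrite h3 u_lowered.
case: (eqVneq i q) => [ei|iq].
  by subst; apply/orP; right; apply/eqP/cd_inj => l; rewrite h3 v_lowered.
by have := h1 i ip iq; have := h3 i; move: ai; rewrite eqxx (hi_off ip iq); lia.
Qed.

Lemma edge_clique23I : edge_clique2 :&: edge_clique3 = [set u; v].
Proof.
apply/setP => w; rewrite in_setI in_set2; apply/idP/idP; last first.
  by case/orP => /eqP ->; rewrite ?u_edge_clique2 ?u_edge_clique3
    ?v_edge_clique2 ?v_edge_clique3.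
move=> /andP[/edge_clique2P[i h2] /edge_clique3P[i' _ h3]].
case: (eqVneq i q) => [ei|iq].
  by subst; apply/orP; left; apply/eqP/cd_inj => l; rewrite h2 u_raised.
case: (eqVneq i p) => [ei|ip].
  by subst; apply/orP; right; apply/eqP/cd_inj => l; rewrite h2 v_raised.
have := h2 i; have := h3 i; rewrite eqxx (lo_off ip iq) (hi_off ip iq).
by case: (i == i'); lia.
Qed.

Section CommonNeighbour.
Variables (w : SRV m n) (p' q' : 'I_m) (b : nat).
Hypotheses (pq' : p' != q') (b_gt0 : 0 < b) (wp' : cd w p' = cd u p' + b)
  (uq' : cd u q' = cd w q' + b) (uw_off : agree_off p' q' u w) (vw : adj v w).

(* If w gains at p too, then v and w differ exactly at q and q', so b = a
   and w = hi - a e_q'. *)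
Lemma common_nbr_same_gain : p' = p -> q' != q -> w \in edge_clique3.
Proof.
move=> ep q'q; subst p'; have q'p : q' != p by rewrite eq_sym.
have wq : cd u q = cd w q by apply: uw_off; rewrite // eq_sym.
have vq' := uv_off q'p q'q.
have vw_off : agree_off q' q v w.
  by apply: adj_agree_off vw q'q _ _; apply/eqP; lia.
have ba : b = a by have := vw_off p pq' pq; lia.
subst b; apply/edge_clique3P; exists q'; first by rewrite (hi_off q'p q'q); lia.
move=> l; case: (eqVneq l q') => [->|lq']; first by rewrite (hi_off q'p q'q); lia.
case: (eqVneq l p) => [->|lp]; first by rewrite /hi; lia.
case: (eqVneq l q) => [->|lq]; first by rewrite /hi; lia.
by rewrite (hi_off lp lq) -(uw_off lp lq'); lia.
Qed.

Lemma common_nbr_same_loss : q' = q -> p' != p -> w \in edge_clique2.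
Proof.
move=> eq p'p; subst q'.
have wp : cd u p = cd w p by apply: uw_off; rewrite // eq_sym.
have vp' := uv_off p'p pq'.
have vw_off : agree_off p' p v w.
  by apply: adj_agree_off vw p'p _ _; apply/eqP; lia.
have ba : b = a by have := vw_off q; rewrite eq_sym (negbTE pq') => /(_ isT qp); lia.
subst b; apply/edge_clique2P; exists p'.
move=> l; case: (eqVneq l p') => [->|lp']; first by rewrite (lo_off p'p pq'); lia.
case: (eqVneq l p) => [->|lp]; first by rewrite /lo; lia.
case: (eqVneq l q) => [->|lq]; first by rewrite /lo; lia.
by rewrite (lo_off lp lq) -(uw_off lp' lq); lia.
Qed.

(* Otherwise v and w differ at three coordinates, unless w moves mass from p
   back to q, in which case it agrees with u off {p,q}. *)
Lemma common_nbr_cross : p' != p -> q' != q -> w \in edge_clique1.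
Proof.
move=> p'p q'q; have pp' : p != p' by rewrite eq_sym.
have vw3 x y z : x != y -> z != x -> z != y ->
    cd v x != cd w x -> cd v y != cd w y -> cd v z = cd w z.
  by move=> xy zx zy dx dy; apply: adj_agree_off vw xy dx dy z zx zy.
case: (eqVneq p' q) => [e1|p'q]; case: (eqVneq q' p) => [e2|q'p]; subst.
- by apply/edge_clique1P => l lp lq; rewrite uw_off.
- exfalso; have wp : cd u p = cd w p by apply: uw_off; rewrite // eq_sym.
  have vq' := uv_off q'p q'q; suff : cd v q' = cd w q' by lia.
  by apply: (vw3 p q q') => //; apply/eqP; lia.
- exfalso; have wq : cd u q = cd w q by apply: uw_off; rewrite // eq_sym.
  have vp' := uv_off p'p p'q; suff : cd v p' = cd w p' by lia.
  by apply: (vw3 p q p') => //; apply/eqP; lia.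
- exfalso; have wp : cd u p = cd w p by apply: uw_off; rewrite // eq_sym.
  have wq : cd u q = cd w q by apply: uw_off; rewrite eq_sym.
  have vp' := uv_off p'p p'q; suff : cd v p' = cd w p' by lia.
  by apply: (vw3 p q p') => //; apply/eqP; lia.
Qed.

End CommonNeighbour.

Lemma common_nbr_edge_cliques w : adj u w -> adj v w ->
  w \in edge_clique1 :|: edge_clique2 :|: edge_clique3.
Proof.
move=> uw vw; have [p' [q' [b [pq' b_gt0 wp' uq' uw_off]]]] := adj_shift uw.
have cn1 := common_nbr_cross pq' b_gt0 wp' uq' uw_off vw.
have cn2 := common_nbr_same_loss pq' b_gt0 wp' uq' uw_off vw.
have cn3 := common_nbr_same_gain pq' b_gt0 wp' uq' uw_off vw.
rewrite !in_setU; case: (eqVneq p' p) => [ep|p'p]; case: (eqVneq q' q) => [eq|q'q].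
- subst; rewrite (_ : w \in edge_clique1) //.
  by apply/edge_clique1P => l lp lq; rewrite uw_off.
- by rewrite cn3 ?orbT.
- by rewrite cn2 ?orbT.
- by rewrite cn1.
Qed.

Lemma edge_cliques : exists C1 C2 C3 : {set SRV m n},
  [/\ largest_type 1 u v C1, largest_type 2 u v C2 & largest_type 3 u v C3] /\
  [/\ C1 :&: C2 = [set u; v], C1 :&: C3 = [set u; v], C2 :&: C3 = [set u; v]
    & forall w, adj u w -> adj v w -> w \in C1 :|: C2 :|: C3].
Proof.
exists edge_clique1, edge_clique2, edge_clique3; split.
  split; [exact: edge_clique1_largest|exact: edge_clique2_largest|].
  exact: edge_clique3_largest.
split; [exact: edge_clique12I|exact: edge_clique13I|exact: edge_clique23I|].
exact: common_nbr_edge_cliques.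
Qed.

End Edge.

Section Cliques.
Variables m n : nat.
Local Notation V := (SRV m n).
Implicit Types u v w : V.

Lemma adj_edge_cliques u v : adj u v -> exists C1 C2 C3 : {set V},
  [/\ largest_type 1 u v C1, largest_type 2 u v C2 & largest_type 3 u v C3] /\
  [/\ C1 :&: C2 = [set u; v], C1 :&: C3 = [set u; v], C2 :&: C3 = [set u; v]
    & forall w, adj u w -> adj v w -> w \in C1 :|: C2 :|: C3].
Proof.
move=> /adj_shift [p [q [a [pq a_gt0 vp uq uv_off]]]].
exact: edge_cliques pq a_gt0 vp uq uv_off.
Qed.

Lemma largest_type_uniq i u v C C' :
  largest_type i u v C -> largest_type i u v C' -> C = C'.
Proof.
move=> [hC [hu [hv maxC]]] [hC' [hu' [hv' maxC']]].
by apply/eqP; rewrite eqEsubset maxC' // maxC.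
Qed.

Lemma largest_type_exists i u v : 1 <= i <= 3 -> adj u v ->
  exists C, largest_type i u v C.
Proof.
move=> hi /adj_edge_cliques [C1 [C2 [C3 [[h1 h2 h3] _]]]].
by case: i hi => [|[|[|[|i]]]] // _; [exists C1|exists C2|exists C3].
Qed.

Lemma largest_typeI i i' u v C C' : i != i' -> 1 <= i <= 3 -> 1 <= i' <= 3 ->
  adj u v -> largest_type i u v C -> largest_type i' u v C' -> C :&: C' = [set u; v].
Proof.
move=> ii hi hi' /adj_edge_cliques [C1 [C2 [C3 [[h1 h2 h3] [e12 e13 e23 _]]]]] hC hC'.
case: i ii hi hC => [|[|[|[|i]]]] // ii _ hC;
case: i' ii hi' hC' => [|[|[|[|i']]]] // ii _ hC';
rewrite ?(largest_type_uniq hC h1) ?(largest_type_uniq hC h2)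
  ?(largest_type_uniq hC h3) ?(largest_type_uniq hC' h1)
  ?(largest_type_uniq hC' h2) ?(largest_type_uniq hC' h3) //;
by rewrite setIC.
Qed.

Lemma largest_type_maximal i u v C : largest_type i u v C -> maximal_type i u C.
Proof.
move=> [hC [hu [hv maxC]]]; split => //; split => // D hD CD.
by apply/eqP; rewrite eqEsubset CD maxC //; apply: (subsetP CD).
Qed.

Lemma maximal_type_largest i u v C C' : maximal_type i u C -> v \in C ->
  largest_type i u v C' -> C = C'.
Proof.
move=> [hC [hu maxC]] hv [hC' [_ [_ maxC']]].
by apply/esym/maxC => //; apply: maxC'.
Qed.

Lemma common_nbr_largest_type u v w : adj u v -> adj u w -> adj v w ->
  exists i C, [/\ 1 <= i <= 3, largest_type i u v C & w \in C].
Proof.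
move=> /adj_edge_cliques [C1 [C2 [C3 [[h1 h2 h3] [_ _ _ common]]]]] uw vw.
move: (common w uw vw); rewrite !in_setU => /orP[/orP[]|] hw.
- by exists 1, C1.
- by exists 2, C2.
- by exists 3, C3.
Qed.

Lemma maximal_type_nbrs i u C :
  maximal_type i u C -> C :\ u \subset [set w | adj u w].
Proof.
move=> [[clq _] [hu _]]; apply/subsetP => w; rewrite !inE => /andP[wu wC].
by apply: clq; rewrite // eq_sym.
Qed.

Lemma maximal_type_partition i u w : 1 <= i <= 3 -> adj u w ->
  exists! C, maximal_type i u C /\ w \in C :\ u.
Proof.
move=> hi uw; have [C hC] := largest_type_exists hi uw.
exists C; split.
  split; first exact: largest_type_maximal hC.
  by rewrite !inE eq_sym adj_neq //; case: hC => _ [_ [->]].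
by move=> D [hD /setD1P[_ wD]]; apply/esym/(maximal_type_largest hD wD).
Qed.

Lemma maximal_type_neq0 i u C : 1 <= i <= 3 -> maximal_type i u C ->
  [set w | adj u w] != set0 -> C :\ u != set0.
Proof.
move=> hi hC /set0Pn [w]; rewrite inE => uw.
have [D hD] := largest_type_exists hi uw.
apply/negP => /eqP C0; case: hC => hC [hu maxC].
have CD : C \subset D.
  apply/subsetP => x xC; case: (eqVneq x u) => [->|xu]; first by case: hD => _ [].
  have : x \in C :\ u by rewrite !inE xu xC.
  by rewrite C0 inE.
have : w \in C :\ u.
  by rewrite -(maxC D hD.1 CD) !inE eq_sym adj_neq //; case: hD => _ [_ []].
by rewrite C0 inE.
Qed.

Lemma nbr_edge_in_unique_maximal_type u v w : adj u v -> adj u w -> adj v w ->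
  exists i C, [/\ 1 <= i <= 3, maximal_type i u C, v \in C & w \in C] /\
    forall i' C', 1 <= i' <= 3 -> maximal_type i' u C' ->
      v \in C' -> w \in C' -> i' = i /\ C' = C.
Proof.
move=> uv uw vw; have [i [C [hi hC wC]]] := common_nbr_largest_type uv uw vw.
exists i, C; split.
  by split => //; [exact: largest_type_maximal hC|case: hC => _ [_ []]].
move=> i' C' hi' hC' vC' wC'; have [D hD] := largest_type_exists hi' uv.
have C'D := maximal_type_largest hC' vC' hD.
case: (eqVneq i' i) => [ei|i'i].
  by subst i'; rewrite C'D (largest_type_uniq hD hC).
have := largest_typeI i'i hi' hi uv hD hC.
move/setP/(_ w); rewrite in_setI -C'D wC' wC in_set2 /=.
by case/esym/orP => /eqP ew; subst w; rewrite adjxx in uw vw.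
Qed.

(* Two non-adjacent common neighbours of an edge never share one of its
   three cliques, so the four independent common neighbours would have to
   fit into three cliques one at a time. *)
Lemma no_induced_K114 : ~ (exists (a b : V) (c : 'I_4 -> V),
  [/\ injective c, adj a b, forall k, adj a (c k) /\ adj b (c k)
    & forall k l, k != l -> ~~ adj (c k) (c l)]).
Proof.
case=> a [b [c [c_inj ab abc indep]]].
have [C1 [C2 [C3 [[h1 h2 h3] [_ _ _ common]]]]] := adj_edge_cliques ab.
pose P (C : {set V}) := [set k | c k \in C].
have P_le1 i C : largest_type i a b C -> #|P C| <= 1.
  move=> [[clq _] _]; apply/card_le1_eqP => k l; rewrite !inE => hk hl.
  apply/eqP; apply: contraT => kl; have := indep l k kl.
  by rewrite clq // (inj_eq c_inj).
have cover : [set: 'I_4] = P C1 :|: P C2 :|: P C3.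
  by apply/setP => k; rewrite !inE -!in_setU common //; case: (abc k).
have := (leq_card_setU (P C1 :|: P C2) (P C3)).1.
have := (leq_card_setU (P C1) (P C2)).1.
have := P_le1 _ _ h1; have := P_le1 _ _ h2; have := P_le1 _ _ h3.
by rewrite -cover cardsT card_ord; lia.
Qed.

End Cliques.

Theorem lemma11 (m n : nat) :
  (* (i) *)
  (forall u v : SRV m n, adj u v ->
     exists C1 C2 C3 : {set SRV m n},
       [/\ largest_type 1 u v C1, largest_type 2 u v C2 & largest_type 3 u v C3] /\
       [/\ C1 :&: C2 = [set u; v], C1 :&: C3 = [set u; v], C2 :&: C3 = [set u; v]
         & forall w, adj u w -> adj v w -> w \in C1 :|: C2 :|: C3])
  /\
  (* (ii) *)
  (forall u : SRV m n,
     let U := [set w | adj u w] in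
     (forall i, 1 <= i <= 3 ->
        [/\ forall C, maximal_type i u C -> C :\ u \subset U,
            forall C, maximal_type i u C -> U != set0 -> C :\ u != set0
          & forall w, w \in U ->
              exists! C, maximal_type i u C /\ w \in C :\ u])
     /\
     (forall v w, v \in U -> w \in U -> adj v w ->
        exists i C, [/\ 1 <= i <= 3, maximal_type i u C, v \in C & w \in C] /\
          forall i' C', 1 <= i' <= 3 -> maximal_type i' u C' ->
            v \in C' -> w \in C' -> i' = i /\ C' = C))
  /\
  (* (iii) no induced K_{1,1,4} *)
  ~ (exists (a b : SRV m n) (c : 'I_4 -> SRV m n),
       [/\ injective c, adj a b,
           forall k, adj a (c k) /\ adj b (c k)
         & forall k l, k != l -> ~~ adj (c k) (c l)]).
Proof.
split; first exact: adj_edge_cliques.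
split; last exact: no_induced_K114.
move=> u U; split.
  move=> i hi; split.
  - exact: maximal_type_nbrs.
  - by move=> C; exact: maximal_type_neq0.
  - by move=> w; rewrite inE; exact: maximal_type_partition.
by move=> v w; rewrite !inE; exact: nbr_edge_in_unique_maximal_type.
Qed.
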